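(* Let $U\subseteq\mathbb{R}^m$ be a connected open set with coordinates $(f_1,\dots,f_m)$, and let $h_1,\dots,h_m:U\to(0,\infty)$ be differentiable functions satisfying $$\frac{\partial h_\alpha}{\partial f_\beta}=\delta_{\alpha\beta}h_\beta-h_\alpha h_\beta,\qquad \alpha,\beta\in\{1,\dots,m\}.$$ Then there exist real constants $\gamma,\sigma_1,\dots,\sigma_m$ such that, with $$\tilde F:=\log\Big(\gamma+\sum_{\alpha=1}^m e^{f_\alpha-\sigma_\alpha}\Big),$$ one has $h_\alpha=\partial\tilde F/\partial f_\alpha$ for all $\alpha=1,\dots,m$ on $U$.
   Context: $\delta_{\alpha\beta}$ denotes the Kronecker delta. The functions $h_\alpha$ play the role of generalized Gibbs weights depending on the variables $f_1,\dots,f_m$. *)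

From HB Require Import structures.
From mathcomp Require Import all_boot all_order all_algebra.
From mathcomp Require Import all_classical all_reals all_analysis.
Set Implicit Arguments. Unset Strict Implicit. Unset Printing Implicit Defensive.
Import Order.TTheory GRing.Theory Num.Theory.
Import numFieldNormedType.Exports.
Local Open Scope ring_scope.

Definition coord_dir {R : realType} {m : nat} (a : 'I_m) : 'rV[R]_m :=
  delta_mx 0 a.

Definition partial {R : realType} {m : nat} (a : 'I_m)
  (g : 'rV[R]_m -> R) (x : 'rV[R]_m) : R := 'D_(coord_dir a) g x.

From HB Require Import structures.
From mathcomp Require Import all_boot all_order all_algebra.
From mathcomp Require Import all_classical all_reals all_analysis.
From mathcomp Require Import ring lra.
Import Order.TTheory GRing.Theory Num.Theory.
Import numFieldNormedType.Exports.
Local Open Scope ring_scope.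
Local Open Scope classical_set_scope.

(* Put [logZ_a := f_a - ln h_a].  The hypothesis on the [h_a] says exactly
   that every [logZ_a] has gradient [(h_1, ..., h_m)]; on the connected set [U]
   they therefore differ by constants, [logZ_a = logZ_1 + sigma_a], i.e.
   [h_a = e^(f_a - sigma_a) / Z] with [Z := e^(logZ_1)].  Then [Z] and
   [sum_b e^(f_b - sigma_b)] both have gradient [(h_b Z)_b], so they differ by
   a constant [gamma], and [ln (gamma + sum_b e^(f_b - sigma_b)) = logZ_1]
   has gradient [h]. *)

Lemma connected_locally_const (T : topologicalType) (X : Type) (A : set T)
    (g : T -> X) :
  connected A -> (forall y, A y -> \forall z \near y, g z = g y) ->
  forall x y, A x -> A y -> g y = g x.
Proof.
move=> cA gloc x y Ax Ay.
suff BA : [set z | A z /\ g z = g x] = A.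
  by have [] : [set z | A z /\ g z = g x] y by rewrite BA.
apply: cA; first by exists x.
- exists (interior [set z | g z = g x]); first exact: open_interior.
  apply/seteqP; split => [z [Az gz]|z [Az /nbhs_singleton gz]] //.
  by split => //; apply: filterS (gloc z Az) => w /= ->.
- exists (~` interior [set z | g z <> g x]).
    exact/open_closedC/open_interior.
  apply/seteqP; split => [z [Az gz]|z [Az gz]].
    by split => // /nbhs_singleton.
  split => //; apply: contrapT => gzx; apply: gz.
  by apply: filterS (gloc z Az) => w /= ->.
Qed.

Section RealValuedFunctions.
Context {R : realType} {V : normedModType R}.
Implicit Types (g : V -> R) (y z : V).

Lemma segment_diff0_eq g y z :
  (forall t : R, 0 <= t <= 1 -> is_diff (y + t *: (z - y)) g 0) -> g z = g y.
Proof.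
move=> gdiff0.
pose phi t := g (y + t *: (z - y)).
have dphi (t : R) : 0 <= t <= 1 -> is_derive t 1 phi 0.
  move=> t01; have -> : phi = g \o (cst y + *:%R^~ (z - y)) by [].
  have [phi_diff phi_d0] : is_diff t (g \o (cst y + *:%R^~ (z - y))) 0.
    by apply: is_diff_eq; [apply: is_diff_comp; exact: gdiff0 | apply/funext].
  by apply: DeriveDef; [exact: diff_derivable | rewrite deriveE // phi_d0].
have [c _] : exists2 c : R, c \in `[0, 1]%R & phi 1 - phi 0 = 0 * (1 - 0).
  apply: (@MVT_segment _ phi (fun=> 0)) => [|x|]; first exact: ler01.
    by rewrite in_itv /= => /andP[x0 x1]; apply: dphi; rewrite !ltW.
  apply: continuous_in_subspaceT => x; rewrite inE /= in_itv /= => x01.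
  have [/derivable1_diffP dx _] := dphi x x01.
  exact: differentiable_continuous.
by rewrite mul0r /phi scale1r scale0r addr0 subrKC => /subr0_eq.
Qed.

Lemma open_diff0_locally_const g (U : set V) : open U ->
  (forall p, U p -> is_diff p g 0) ->
  forall y, U y -> \forall z \near y, g z = g y.
Proof.
move=> oU gdiff0 y Uy.
have /nbhs_ballP[e e0 yeU] : nbhs y U.
  exact: (@open_nbhs_nbhs _ _ _ (conj oU Uy)).
apply/nbhs_ballP; exists e => // z; rewrite -ball_normE /= => yz.
apply: segment_diff0_eq => t /andP[t0 t1]; apply/gdiff0/yeU.
rewrite -ball_normE /= opprD addrA subrr sub0r normrN normrZ ger0_norm //.
by rewrite -normrN opprB (le_lt_trans _ yz) // ler_piMl.
Qed.

Lemma connected_diff0_const g (U : set V) : open U -> connected U ->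
  (forall p, U p -> is_diff p g 0) -> forall x y, U x -> U y -> g y = g x.
Proof.
by move=> oU cU gdiff0; apply/connected_locally_const/open_diff0_locally_const.
Qed.

Lemma is_derive_comp1 (f : V -> R) (g : R -> R) {x v : V} {df dg : R} :
  differentiable f x -> is_derive x v f df -> is_derive (f x) 1 g dg ->
  is_derive x v (g \o f) (dg * df).
Proof.
move=> dfx [_ <-] [/derivable1_diffP dgfx <-].
apply: DeriveDef; first exact/diff_derivable/differentiable_comp.
rewrite deriveE; last exact: differentiable_comp.
by rewrite diff_comp //= diff1E // derive1E -deriveE // mulrC.
Qed.
End RealValuedFunctions.

Section Partials.
Context {R : realType} {m : nat}.
Local Notation V := 'rV[R]_m.
Implicit Types (g : V -> R) (U : set V).

Lemma coord_dirE (b a : 'I_m) : (coord_dir b : V) ord0 a = (a == b)%:R.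
Proof. by rewrite mxE eqxx. Qed.

Lemma partials0_is_diff0 g p :
  differentiable g p -> (forall b, partial b g p = 0) -> is_diff p g 0.
Proof.
move=> dg g0; apply: DiffDef => //; apply/funext => v.
rewrite (row_sum_delta v) linear_sum big1 // => b _.
by rewrite linearZ /= -deriveE // -/(coord_dir b) -/(partial b g p) g0 scaler0.
Qed.

Lemma eq_partials_subr_const g1 g2 U : open U -> connected U ->
  (forall p, U p -> differentiable g1 p) ->
  (forall p, U p -> differentiable g2 p) ->
  (forall b p, U p -> partial b g1 p = partial b g2 p) ->
  forall x y, U x -> U y -> g1 y - g2 y = g1 x - g2 x.
Proof.
move=> oU cU dg1 dg2 eq12.
suff gdiff0 : forall p, U p -> is_diff p (g1 - g2) 0.
  by move=> x y; exact: (connected_diff0_const _ _ oU cU gdiff0).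
move=> p Up.
apply: partials0_is_diff0.
  by apply: differentiableB; [exact: dg1 | exact: dg2].
move=> b; rewrite /partial deriveB; last 2 first.
- exact/diff_derivable/dg1.
- exact/diff_derivable/dg2.
by apply/eqP; rewrite subr_eq0; apply/eqP; exact: eq12.
Qed.

Lemma is_derive_coord (x v : V) a :
  is_derive x v (fun y : V => y ord0 a) (v ord0 a).
Proof.
apply: DeriveDef; first exact/diff_derivable/differentiable_coord.
have := @derive_mx R V 1 m id x v (@derivable_id _ _ x v).
by rewrite derive_id => /(congr1 (fun M : V => M ord0 a)); rewrite mxE.
Qed.

Definition expsum (s : 'I_m -> R) (y : V) := \sum_b expR (y ord0 b - s b).

Lemma expsumE s : expsum s = \sum_b (fun y : V => expR (y ord0 b - s b)).
Proof. by apply/funext => y; rewrite fct_sumE. Qed.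

Lemma differentiable_expsum s x : differentiable (expsum s) x.
Proof.
rewrite expsumE; apply: differentiable_sum => b.
apply: (differentiable_comp (f := fun y : V => y ord0 b - s b) (g := expR)).
  exact/differentiableB/differentiable_cst/differentiable_coord.
exact/derivable1_diffP/ex_derive.
Qed.

Lemma partial_expsum s a x :
  is_derive x (coord_dir a) (expsum s) (expR (x ord0 a - s a)).
Proof.
rewrite expsumE; apply: is_derive_eq (is_derive_sum _) _ => [b|].
  apply: (is_derive_comp1 (fun y : V => y ord0 b - s b) expR).
  - exact/differentiableB/differentiable_cst/differentiable_coord.
  - exact: (is_deriveB (is_derive_coord x _ b) (is_derive_cst (s b) x _)).
rewrite (bigD1 a) //= big1 => [|b ba].
  by rewrite coord_dirE eqxx subr0 mulr1 addr0.
by rewrite coord_dirE (negPf ba) subr0 mulr0.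
Qed.
End Partials.

Section GibbsWeights.
Context {R : realType} {m : nat}.
Local Notation V := 'rV[R]_m.
Context {U : set V} {h : 'I_m -> V -> R}.
Hypothesis oU : open U.
Hypothesis cU : connected U.
Hypothesis h_gt0 : forall a x, U x -> 0 < h a x.
Hypothesis h_diff : forall a x, U x -> differentiable (h a) x.
Hypothesis h_partial : forall a b x, U x ->
  partial b (h a) x = (a == b)%:R * h b x - h a x * h b x.

Definition logZ a (y : V) := y ord0 a - ln (h a y).

Lemma differentiable_logZ a x : U x -> differentiable (logZ a) x.
Proof.
move=> Ux; apply: differentiableB; first exact: differentiable_coord.
have dln : differentiable (@ln R) (h a x).
  exact/derivable1_diffP/ex_derive/is_derive1_ln/h_gt0.
exact: differentiable_comp (h_diff a x Ux) dln.
Qed.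

Lemma partial_logZ a b x : U x -> is_derive x (coord_dir b) (logZ a) (h b x).
Proof.
move=> Ux; have ha0 : h a x != 0 by rewrite gt_eqF ?h_gt0.
have dh : is_derive x (coord_dir b) (h a) (partial b (h a) x).
  exact/derivableP/diff_derivable/h_diff.
have dln := is_derive1_ln (h_gt0 a x Ux).
apply: is_derive_eq (is_deriveB (is_derive_coord x _ a)
  (is_derive_comp1 (h a) (@ln R) (h_diff a x Ux) dh dln)) _.
rewrite h_partial // coord_dirE.
by case: eqVneq => [<-|_] /=; field.
Qed.

Context (a0 : 'I_m) (x0 : V).
Hypothesis Ux0 : U x0.

Definition gibbs_sigma a := logZ a x0 - logZ a0 x0.

Lemma logZE a x : U x -> logZ a x = logZ a0 x + gibbs_sigma a.
Proof.
move=> Ux.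
have same_partials b p : U p -> partial b (logZ a) p = partial b (logZ a0) p.
  move=> Up; rewrite /partial.
  have [_ ->] := partial_logZ a b p Up.
  by have [_ ->] := partial_logZ a0 b p Up.
have := eq_partials_subr_const _ _ _ oU cU (differentiable_logZ a)
  (differentiable_logZ a0) same_partials _ _ Ux0 Ux.
by rewrite /gibbs_sigma => <-; rewrite subrKC.
Qed.

Lemma expR_sub_gibbs_sigma a x : U x ->
  expR (x ord0 a - gibbs_sigma a) = h a x * expR (logZ a0 x).
Proof.
move=> Ux; have := logZE a x Ux; rewrite /logZ => E.
have -> : x ord0 a - gibbs_sigma a = ln (h a x) + logZ a0 x.
  by rewrite /logZ; lra.
by rewrite expRD lnK // posrE h_gt0.
Qed.

Definition gibbs_gamma := expR (logZ a0 x0) - expsum gibbs_sigma x0.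

Lemma gibbs_gamma_add_expsum x : U x ->
  gibbs_gamma + expsum gibbs_sigma x = expR (logZ a0 x).
Proof.
move=> Ux.
have dexpL p : U p -> differentiable (expR \o logZ a0) p.
  move=> Up; apply: differentiable_comp; first exact: differentiable_logZ.
  exact/derivable1_diffP/ex_derive.
have same_partials b p : U p ->
    partial b (expR \o logZ a0) p = partial b (expsum gibbs_sigma) p.
  move=> Up; rewrite /partial; have [_ ->] := partial_expsum gibbs_sigma b p.
  have [_ ->] := is_derive_comp1 (logZ a0) expR (differentiable_logZ a0 p Up)
    (partial_logZ a0 b p Up) (is_derive_expR _).
  by rewrite expR_sub_gibbs_sigma // mulrC.
have := eq_partials_subr_const _ _ _ oU cU dexpL
  (fun p _ => differentiable_expsum gibbs_sigma p) same_partials _ _ Ux0 Ux.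
by rewrite /gibbs_gamma => <-; rewrite subrK.
Qed.

End GibbsWeights.

Theorem proposition5p1 (R : realType) (m : nat) (U : set 'rV[R]_m)
  (h : 'I_m -> 'rV[R]_m -> R) :
  open U -> connected U ->
  (forall a x, U x -> 0 < h a x) ->
  (forall a x, U x -> differentiable (h a) x) ->
  (forall a b x, U x ->
     partial b (h a) x = (a == b)%:R * h b x - h a x * h b x) ->
  exists (gamma : R) (sigma : 'I_m -> R),
    forall x, U x ->
      0 < gamma + \sum_(b < m) expR (x ord0 b - sigma b) /\
      forall a,
        is_derive x (coord_dir a)
          (fun y : 'rV[R]_m => ln (gamma + \sum_(b < m) expR (y ord0 b - sigma b)))
          (h a x).
Proof.
move=> oU cU h_gt0 h_diff h_partial.
case: m => [|m] in U h oU cU h_gt0 h_diff h_partial *.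
  by exists 1, (fun=> 0) => x _; split => [|[]//]; rewrite big_ord0 addr0.
have [[x0 Ux0]|noU] := pselect (exists x, U x); last first.
  by exists 1, (fun=> 0) => x Ux; exfalso; apply: noU; exists x.
have Zx := gibbs_gamma_add_expsum oU cU h_gt0 h_diff h_partial ord0 x0 Ux0.
exists (gibbs_gamma (h := h) ord0 x0), (gibbs_sigma (h := h) ord0 x0) => x Ux.
split => [|a]; first by rewrite Zx ?expR_gt0.
apply: near_eq_is_derive (partial_logZ h_gt0 h_diff h_partial ord0 a x Ux).
have : \forall y \near x, U y by exact: (@open_nbhs_nbhs _ _ _ (conj oU Ux)).
by apply: filterS => y Uy; rewrite /= Zx ?expRK.
Qed.
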